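(* For every integer $n\ge3$, let $\mathcal{S}_n$ be the regular $n$-gon state space. Then $\lambda_{max}(\mathcal{S}_n)=2$ when $n$ is even and $\lambda_{max}(\mathcal{S}_n)=1+\sec(\pi/n)>2$ when $n$ is odd.
   Context: The regular $n$-gon state space $\mathcal{S}_n\subset\mathbb{R}^3$ is the convex hull of the points $s_j=(r_n\cos(2j\pi/n),\,r_n\sin(2j\pi/n),\,1)^T$, $j=1,\ldots,n$, where $r_n=\sqrt{\sec(\pi/n)}$. Effects are linear functionals $e$ on $\mathbb{R}^3$ with $0\le e(s)\le1$ for all $s\in\mathcal{S}_n$; the unit effect is $u=(0,0,1)$ (acting by the dot product). For a linear functional $f$, $\|f\|=\max_{s\in\mathcal{S}_n}|f(s)|$. A measurement with finite outcome set $\Omega$ is a map $x\mapsto\mathsf{M}_x$ to effects with $\sum_x\mathsf{M}_x=u$; its decoding power is $\lambda_{max}(\mathsf{M})=\sum_x\|\mathsf{M}_x\|$, and the information storability $\lambda_{max}(\mathcal{S}_n)$ is the supremum of $\lambda_{max}(\mathsf{M})$ over all such measurements. *)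

From HB Require Import structures.
From mathcomp Require Import all_boot all_order all_algebra.
From mathcomp Require Import all_classical all_reals all_analysis.
Set Implicit Arguments. Unset Strict Implicit. Unset Printing Implicit Defensive.
Import Order.TTheory GRing.Theory Num.Theory.
Local Open Scope ring_scope.
Local Open Scope classical_set_scope.

Section Ngon.
Variable R : realType.

(* action of a linear functional (given by its coefficient vector) on R^3 *)
Definition dot (f s : 'rV[R]_3) : R := \sum_(i < 3) f 0 i * s 0 i.

Definition rn (n : nat) : R := Num.sqrt (1 / cos (pi / n%:R)).

Definition vertex (n j : nat) : 'rV[R]_3 :=
  \row_(i < 3) match val i with
               | 0 => rn n * cos (2 * j%:R * pi / n%:R)
               | 1 => rn n * sin (2 * j%:R * pi / n%:R)
               | _ => 1
               end.

Definition state_space (n : nat) : set 'rV[R]_3 :=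
  [set s | exists c : 'I_n -> R,
      (forall j, 0 <= c j) /\ \sum_(j < n) c j = 1 /\
      s = \sum_(j < n) c j *: vertex n j.+1].

Definition unit_effect : 'rV[R]_3 := \row_(i < 3) (if val i == 2%N then 1 else 0).

Definition is_effect (n : nat) (e : 'rV[R]_3) : Prop :=
  forall s, state_space n s -> 0 <= dot e s <= 1.

(* ||f|| = max_{s in S_n} |f(s)| (the max is attained; written as a sup) *)
Definition fnorm (n : nat) (f : 'rV[R]_3) : R :=
  sup [set `|dot f s| | s in state_space n].

Definition is_measurement (n k : nat) (M : 'I_k -> 'rV[R]_3) : Prop :=
  (forall x, is_effect n (M x)) /\ \sum_(x < k) M x = unit_effect.

Definition decoding_power (n k : nat) (M : 'I_k -> 'rV[R]_3) : R :=
  \sum_(x < k) fnorm n (M x).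

Definition storability (n : nat) : R :=
  sup [set l | exists (k : nat) (M : 'I_k -> 'rV[R]_3),
          is_measurement n M /\ l = decoding_power n M].

End Ngon.

From HB Require Import structures.
From mathcomp Require Import all_boot all_order all_algebra.
From mathcomp Require Import all_classical all_reals all_analysis.
From mathcomp Require Import ring lra.
Set Implicit Arguments. Unset Strict Implicit. Unset Printing Implicit Defensive.
Import Order.TTheory GRing.Theory Num.Theory.
Local Open Scope ring_scope.
Local Open Scope classical_set_scope.

(** On the boundary of the polygon an effect is a sinusoid [f x = c + a cos x + b sin x]
    of the angle, where [c] is its value on the unit effect, and for every [t]
    [f (x + pi - t) + f (x + pi + t) + 2 cos t f x = 2 (1 + cos t) c].
    Take [t = 0] for even [n] and [t = pi / n] for odd [n]: then [x + pi - t] and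
    [x + pi + t] are vertex angles whenever [x] is, so positivity of the effect there gives
    [||e|| <= (1 + sec t) e(u)], and summing over a measurement bounds the decoding power
    by [1 + sec t].  The bound is attained by the [n]-outcome measurement
    [M_j (s_m) = (1 + cos (theta_j - theta_m) / cos t) / n]: its outcomes add up to [u]
    because the vertices are centred at [u], and they are effects because no two vertex
    angles are closer than [t] to being opposite. *)

Section Trigonometry.
Variable R : realType.

Definition sinusoid (c a b x : R) : R := c + a * cos x + b * sin x.

Lemma sinusoid_reflect c a b x t :
  sinusoid c a b (x + pi - t) + sinusoid c a b (x + pi + t)
    + 2 * cos t * sinusoid c a b x = 2 * (1 + cos t) * c.
Proof.
by rewrite /sinusoid !(addrAC x pi) !cosDpi !sinDpi cosB sinB cosD sinD; ring.
Qed.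

Lemma sinusoid_le_sec c a b x t : 0 < cos t ->
  0 <= sinusoid c a b (x + pi - t) -> 0 <= sinusoid c a b (x + pi + t) ->
  sinusoid c a b x <= (1 + 1 / cos t) * c.
Proof.
move=> ct_gt0 h1 h2; have := sinusoid_reflect c a b x t.
have -> : (1 + 1 / cos t) * c = (1 + cos t) * c / cos t by field; rewrite gt_eqF.
rewrite ler_pdivlMr //; nra.
Qed.

Lemma Ncos_le_cos (a x : R) : 0 <= a <= pi -> 0 <= x <= pi *+ 2 ->
  (x <= pi - a) || (pi + a <= x) -> - cos a <= cos x.
Proof.
move=> a_bd x_bd x_far; have pi_gt0 := @pi_gt0 R.
have -> : - cos a = cos (pi - a) by rewrite cosB cospi sinpi; ring.
have cos_decr y : 0 <= y <= pi - a -> cos (pi - a) <= cos y.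
  move=> y_bd; rewrite leNgt ltr_cos ?in_itv /= -?leNgt; lra.
case/orP: x_far => [|x_ge]; first by move=> x_le; apply: cos_decr; lra.
have -> : cos x = cos (- x + pi *+ 2) by rewrite cosD2pi cosN.
by apply: cos_decr; lra.
Qed.

Lemma cos_pi_div_gt0 (n : nat) : (3 <= n)%N -> 0 < cos (pi / n%:R : R).
Proof.
move=> n_ge3; have pi_gt0 := @pi_gt0 R.
have n_ge3' : (3 : R) <= n%:R by rewrite ler_nat.
apply: cos_gt0_pihalf; apply/andP; split.
  by apply: lt_le_trans (divr_ge0 (ltW pi_gt0) (ler0n _ _)); lra.
by rewrite ltr_pM2l // ltf_pV2 ?posrE //; lra.
Qed.

Lemma cos_pi_div_lt1 (n : nat) : (0 < n)%N -> cos (pi / n%:R : R) < 1.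
Proof.
move=> n_gt0; have pi_gt0 := @pi_gt0 R.
have n_ge1 : (1 : R) <= n%:R by rewrite ler1n.
have a_gt0 : 0 < pi / n%:R :> R by rewrite divr_gt0 // ltr0n.
have a_le : pi / n%:R <= pi :> R by rewrite ler_pdivrMr ?ltr0n //; nra.
by rewrite -[X in _ < X]cos0 ltr_cos ?in_itv /= ?lexx ?(ltW a_gt0) ?a_le ?pi_ge0.
Qed.

End Trigonometry.

Section Polygon.
Variables (R : realType) (n : nat).
Implicit Types (e s : 'rV[R]_3) (j m : nat).

Definition i0 : 'I_3 := Ordinal (isT : (0 < 3)%N).
Definition i1 : 'I_3 := Ordinal (isT : (1 < 3)%N).
Definition i2 : 'I_3 := Ordinal (isT : (2 < 3)%N).

Definition angle j : R := 2 * j%:R * pi / n%:R.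

Lemma angleD j m : angle (j + m) = angle j + angle m.
Proof. by rewrite /angle natrD; ring. Qed.

Lemma vertexE j :
  vertex R n j = \row_(i < 3) [:: rn R n * cos (angle j); rn R n * sin (angle j); 1]`_i.
Proof. by apply/rowP => i; rewrite !mxE; case: i => [[|[|[|]]] ?]. Qed.

Lemma dot_expand e s : dot e s = e 0 i0 * s 0 i0 + e 0 i1 * s 0 i1 + e 0 i2 * s 0 i2.
Proof.
rewrite /dot !big_ord_recr big_ord0 /= add0r.
by congr (_ * _ + _ * _ + _ * _); congr (_ _ _); apply: val_inj.
Qed.

Lemma dot_vertex e j : dot e (vertex R n j) =
  sinusoid (e 0 i2) (rn R n * e 0 i0) (rn R n * e 0 i1) (angle j).
Proof. by rewrite dot_expand !mxE /= /sinusoid; ring. Qed.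

Lemma dot_unit_effect s : dot (unit_effect R) s = s 0 i2.
Proof. by rewrite dot_expand !mxE /= !mul0r !add0r mul1r. Qed.

Lemma dot_suml k (M : 'I_k -> 'rV[R]_3) s :
  dot (\sum_(x < k) M x) s = \sum_(x < k) dot (M x) s.
Proof.
rewrite /dot; under eq_bigr => i _ do rewrite summxE mulr_suml.
exact: exchange_big.
Qed.

Lemma dot_convex e (c : 'I_n -> R) :
  dot e (\sum_(j < n) c j *: vertex R n j.+1) = \sum_(j < n) c j * dot e (vertex R n j.+1).
Proof.
rewrite /dot; under eq_bigr => i _ do rewrite summxE mulr_sumr.
rewrite exchange_big /=; apply: eq_bigr => j _; rewrite mulr_sumr.
by apply: eq_bigr => i _; rewrite mxE mulrCA.
Qed.

Lemma state_space_z s : state_space n s -> s 0 i2 = 1.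
Proof.
move=> [c [_ [c_sum1 ->]]]; rewrite summxE -c_sum1; apply: eq_bigr => j _.
by rewrite !mxE mulr1.
Qed.

Lemma dot_state_le e s B : state_space n s ->
  (forall j : 'I_n, dot e (vertex R n j.+1) <= B) -> dot e s <= B.
Proof.
move=> [c [c_ge0 [c_sum1 ->]]] le_B; rewrite dot_convex -[B]mul1r -c_sum1 mulr_suml.
by apply: ler_sum => j _; rewrite ler_wpM2l.
Qed.

Lemma dot_state_ge e s B : state_space n s ->
  (forall j : 'I_n, B <= dot e (vertex R n j.+1)) -> B <= dot e s.
Proof.
move=> [c [c_ge0 [c_sum1 ->]]] ge_B; rewrite dot_convex -[B]mul1r -c_sum1 mulr_suml.
by apply: ler_sum => j _; rewrite ler_wpM2l.
Qed.

Hypothesis n_gt0 : (0 < n)%N.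

Lemma angle_mul_n q : angle (q * n) = pi *+ 2 *+ q.
Proof.
rewrite /angle -mulrnA -[RHS]mulr_natr !natrM.
by field; rewrite pnatr_eq0 -lt0n.
Qed.

Lemma vertex_modn m : vertex R n m = vertex R n (m %% n).
Proof.
rewrite !vertexE.
have -> : angle m = angle (m %% n) + pi *+ 2 *+ (m %/ n).
  by rewrite {1}(divn_eq m n) angleD angle_mul_n addrC.
by rewrite (periodicn (@cosD2pi R)) (periodicn (@sinD2pi R)).
Qed.

Lemma state_space_vertex m : state_space n (vertex R n m).
Proof.
have [j ->] : exists j : 'I_n, vertex R n m = vertex R n j.+1.
  have lt_n : ((m + n.-1) %% n < n)%N by rewrite ltn_mod.
  exists (Ordinal lt_n); rewrite /= vertex_modn [RHS]vertex_modn; congr (vertex R n _).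
  by rewrite -addn1 modnDml -addnA addn1 prednK // modnDr.
exists (fun i => (i == j)%:R); split; first by move=> i; rewrite ler0n.
split; first by rewrite (bigD1 j) //= eqxx big1 ?addr0 // => i /negbTE ->.
rewrite (bigD1 j) //= eqxx scale1r big1 ?addr0 // => i /negbTE ->.
by rewrite scale0r.
Qed.

Lemma vertex_le_fnorm e m : is_effect n e -> dot e (vertex R n m) <= fnorm n e.
Proof.
move=> e_eff; have v_in := state_space_vertex m; have /andP[e_ge0 _] := e_eff _ v_in.
rewrite -(ger0_norm e_ge0); apply: sup_upper_bound; last by exists (vertex R n m).
split; first by exists `|dot e (vertex R n m)|, (vertex R n m).
exists 1 => _ [s s_in <-]; have /andP[? ?] := e_eff s s_in.
by rewrite ger0_norm.
Qed.

Lemma fnorm_le e B : is_effect n e ->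
  (forall m, dot e (vertex R n m) <= B) -> fnorm n e <= B.
Proof.
move=> e_eff le_B; have v_in := state_space_vertex 0.
apply: ge_sup; first by exists `|dot e (vertex R n 0)|, (vertex R n 0).
move=> _ [s s_in <-]; have /andP[e_ge0 _] := e_eff s s_in.
by rewrite ger0_norm //; apply: dot_state_le s_in _ => j.
Qed.

Lemma is_measurement_of_vertex k (M : 'I_k -> 'rV[R]_3) :
  (forall x (j : 'I_n), 0 <= dot (M x) (vertex R n j.+1)) ->
  \sum_(x < k) M x = unit_effect R -> is_measurement n M.
Proof.
move=> M_ge0 M_sum; split=> // x s s_in; rewrite (dot_state_ge s_in (M_ge0 x)) /=.
have : dot (\sum_(y < k) M y) s = 1 by rewrite M_sum dot_unit_effect state_space_z.
rewrite dot_suml (bigD1 x) //= => <-; rewrite lerDl sumr_ge0 // => y _.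
exact: dot_state_ge s_in (M_ge0 y).
Qed.

Lemma decoding_power_le K k (M : 'I_k -> 'rV[R]_3) :
  (forall e, is_effect n e -> fnorm n e <= K * e 0 i2) ->
  is_measurement n M -> decoding_power n M <= K.
Proof.
move=> fnorm_le_K [M_eff M_sum].
apply: (@le_trans _ _ (\sum_(x < k) K * M x 0 i2)).
  by apply: ler_sum => x _; apply: fnorm_le_K.
by rewrite -mulr_sumr -summxE M_sum mxE mulr1.
Qed.

Lemma storability_eq K :
  (forall e, is_effect n e -> fnorm n e <= K * e 0 i2) ->
  (exists k (M : 'I_k -> 'rV[R]_3), is_measurement n M /\ K <= decoding_power n M) ->
  storability R n = K.
Proof.
move=> fnorm_le_K [k [M [M_meas K_le]]].
have K_ub : ubound [set l | exists k (M : 'I_k -> 'rV[R]_3),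
    is_measurement n M /\ l = decoding_power n M] K.
  by move=> _ [k' [M' [M'_meas ->]]]; exact: decoding_power_le M'_meas.
apply/eqP; rewrite eq_le; apply/andP; split.
  by apply: ge_sup => //; exists (decoding_power n M), k, M.
apply: (le_trans K_le); apply: sup_upper_bound; last by exists k, M.
by split; [exists (decoding_power n M), k, M | exists K].
Qed.

Lemma fnorm_le_sec e a d d' : is_effect n e -> 0 < cos a ->
  angle d = pi - a -> angle d' = pi + a -> fnorm n e <= (1 + 1 / cos a) * e 0 i2.
Proof.
move=> e_eff ca_gt0 d_eq d'_eq; apply: fnorm_le => // m; rewrite dot_vertex.
have e_ge0 j : 0 <= dot e (vertex R n j) by case/andP: (e_eff _ (state_space_vertex j)).
apply: sinusoid_le_sec => //.
  by have := e_ge0 (m + d)%N; rewrite dot_vertex angleD d_eq addrA.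
by have := e_ge0 (m + d')%N; rewrite dot_vertex angleD d'_eq addrA.
Qed.

End Polygon.

Section RegularPolygon.
Variables (R : realType) (n : nat).
Hypothesis n_ge3 : (3 <= n)%N.

Let n_gt0 : (0 < n)%N. Proof. exact: leq_trans n_ge3. Qed.
Let n_neq0 : n%:R != 0 :> R. Proof. by rewrite pnatr_eq0 -lt0n. Qed.

Lemma rn_gt0 : 0 < rn R n.
Proof. by rewrite /rn sqrtr_gt0 divr_gt0 ?cos_pi_div_gt0. Qed.

Lemma sum_cos_angle_sub y : \sum_(j < n) cos (angle R n j.+1 - y) = 0.
Proof.
pose a : R := pi / n%:R.
have sina_gt0 : 0 < sin a.
  apply: sin_gt0_pi; rewrite divr_gt0 ?pi_gt0 ?ltr0n //=.
  by rewrite ltr_pdivrMr ?ltr0n // ltr_pMr ?pi_gt0 // ltr1n; apply: leq_trans n_ge3.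
apply: (@mulfI _ (2 * sin a)); first by rewrite mulf_neq0 ?gt_eqF.
rewrite mulr0 mulr_sumr -(big_mkord xpredT (fun j => 2 * sin a * cos (angle R n j.+1 - y))).
(* [2 sin a cos x = sin (x + a) - sin (x - a)] telescopes, since consecutive vertex
   angles differ by [2 a]. *)
pose f j := sin (angle R n j.+1 - y - a).
rewrite (@telescope_sumr_eq _ _ _ f) //.
  rewrite /f; have -> : angle R n n.+1 = angle R n 1 + pi *+ 2 *+ 1.
    by rewrite -(angle_mul_n R n_gt0) -angleD mul1n add1n.
  by rewrite !(addrAC _ (pi *+ 2 *+ 1)) (periodicn (@sinD2pi R)) subrr.
move=> j _; rewrite /f.
have -> : angle R n j.+2 = angle R n j.+1 + a *+ 2.
  by rewrite -addn1 angleD /angle /a -mulr_natr; ring.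
rewrite (_ : angle R n j.+1 + a *+ 2 - y - a = angle R n j.+1 - y + a);
  last by rewrite mulr2n; ring.
set x := angle R n j.+1 - y.
by rewrite sinD sinB; ring.
Qed.

Lemma sum_vertex : \sum_(j < n) vertex R n j.+1 = n%:R *: unit_effect R.
Proof.
apply/rowP => i; rewrite summxE !mxE.
under eq_bigr => j _ do rewrite vertexE mxE.
case: i => [[|[|[|//]]] ?] /=.
- rewrite -mulr_sumr; under eq_bigr do rewrite -[angle _ _ _]subr0.
  by rewrite sum_cos_angle_sub !mulr0.
- rewrite -mulr_sumr; under eq_bigr do rewrite -cosBpihalf.
  by rewrite sum_cos_angle_sub !mulr0.
- by rewrite sumr_const card_ord mulr1.
Qed.

Definition cosine_measurement (t : R) (j : 'I_n) : 'rV[R]_3 :=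
  n%:R^-1 *: (unit_effect R + (t * rn R n ^+ 2)^-1 *: (vertex R n j.+1 - unit_effect R)).

Lemma dot_cosine_measurement (t : R) j m : t != 0 ->
  dot (cosine_measurement t j) (vertex R n m)
    = (1 + cos (angle R n j.+1 - angle R n m) / t) / n%:R.
Proof.
move=> t_neq0; have := rn_gt0; rewrite lt0r => /andP[rn_neq0 _].
by rewrite dot_expand !mxE /= cosB; field; rewrite n_neq0 t_neq0 rn_neq0.
Qed.

Lemma sum_cosine_measurement t : \sum_(j < n) cosine_measurement t j = unit_effect R.
Proof.
rewrite -scaler_sumr big_split /= -scaler_sumr sumrB sum_vertex !sumr_const card_ord.
by rewrite -[unit_effect R *+ n]scaler_nat subrr scaler0 addr0 scalerA mulVf ?scale1r.
Qed.

Lemma is_measurement_cosine t : 0 < t ->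
  (forall i j : 'I_n, - t <= cos (angle R n i.+1 - angle R n j.+1)) ->
  is_measurement n (cosine_measurement t).
Proof.
move=> t_gt0 cos_ge; apply: is_measurement_of_vertex; last exact: sum_cosine_measurement.
move=> i j; rewrite dot_cosine_measurement ?gt_eqF // divr_ge0 ?ler0n //.
have : -1 <= cos (angle R n i.+1 - angle R n j.+1) / t by rewrite ler_pdivlMr // mulN1r.
lra.
Qed.

Lemma decoding_power_cosine_ge t : 0 < t ->
  (forall i j : 'I_n, - t <= cos (angle R n i.+1 - angle R n j.+1)) ->
  1 + 1 / t <= decoding_power n (cosine_measurement t).
Proof.
move=> t_gt0 cos_ge; have [M_eff _] := is_measurement_cosine t_gt0 cos_ge.
have -> : 1 + 1 / t = \sum_(j < n) (1 + cos 0 / t) / n%:R.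
  by rewrite sumr_const card_ord -[_ *+ n]mulr_natr cos0 divfK.
apply: ler_sum => j _; rewrite -(subrr (angle R n j.+1)) -dot_cosine_measurement ?gt_eqF //.
exact: vertex_le_fnorm.
Qed.

Lemma storability_eq_sec a d d' : 0 < cos a ->
  angle R n d = pi - a -> angle R n d' = pi + a ->
  (forall i j : 'I_n, - cos a <= cos (angle R n i.+1 - angle R n j.+1)) ->
  storability R n = 1 + 1 / cos a.
Proof.
move=> ca_gt0 d_eq d'_eq cos_ge; apply: storability_eq => //.
  by move=> e e_eff; exact: fnorm_le_sec d_eq d'_eq.
exists n, (cosine_measurement (cos a)); split.
  exact: is_measurement_cosine.
exact: decoding_power_cosine_ge.
Qed.

End RegularPolygon.

Lemma angle_half_even (R : realType) k : (0 < k)%N -> angle R k.*2 k = pi.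
Proof. by move=> k_gt0; rewrite /angle -mul2n natrM; field; rewrite pnatr_eq0 -lt0n. Qed.

Lemma angle_half_odd (R : realType) k :
  angle R k.*2.+1 k = pi - pi / (k.*2.+1)%:R /\ angle R k.*2.+1 k.+1 = pi + pi / (k.*2.+1)%:R.
Proof.
have n_eq : (k.*2.+1)%:R = 2 * k%:R + 1 :> R by rewrite -addn1 natrD -mul2n natrM.
have n_neq0 : 2 * k%:R + 1 != 0 :> R by rewrite -n_eq pnatr_eq0.
by rewrite /angle n_eq -[k.+1]addn1 natrD; split; field.
Qed.

Lemma cos_angle_sub_odd (R : realType) n i j : odd n -> (i <= n)%N -> (j <= n)%N ->
  - cos (pi / n%:R) <= cos (angle R n i - angle R n j).
Proof.
move=> n_odd i_le j_le.
wlog ji : i j i_le j_le / (j <= i)%N.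
  move=> wlog_ji; case: (leqP j i) => [|/ltnW]; first exact: wlog_ji.
  by rewrite -[cos (angle R n i - _)]cosN opprB; exact: wlog_ji.
have n_gt0 : (0 < n)%N by case: n n_odd {i_le j_le}.
have nR_gt0 : 0 < n%:R :> R by rewrite ltr0n.
have pi_gt0 := @pi_gt0 R.
rewrite -(subnK ji) angleD addrK; set d := (i - j)%N.
have d_le : (d <= n)%N := leq_trans (leq_subr j i) i_le.
set b := pi / n%:R; have b_gt0 : 0 < b by rewrite divr_gt0.
have pi_eq : pi = n%:R * b by rewrite /b; field; rewrite gt_eqF.
have -> : angle R n d = 2 * d%:R * b by rewrite /angle /b; ring.
have d_le' : d%:R <= n%:R :> R by rewrite ler_nat.
have d_far : (2 * d%:R + 1 <= n%:R :> R) \/ (n%:R + 1 <= 2 * d%:R :> R).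
  have double_R m : (m.*2)%:R = 2 * m%:R :> R by rewrite -mul2n natrM.
  rewrite -double_R !natr1 !ler_nat.
  case: (ltngtP d.*2 n) => [|| n_eq]; [left | right |] => //.
  by move: n_odd; rewrite -n_eq odd_double.
have n_ge1 : 1 <= n%:R :> R by rewrite ler1n.
have d_ge0 : 0 <= d%:R :> R by [].
apply: Ncos_le_cos; rewrite pi_eq ?mulr2n; clearbody b; clear pi_eq.
- by apply/andP; split; nra.
- by apply/andP; split; nra.
by case: d_far => ?; apply/orP; [left | right]; nra.
Qed.

Theorem corollary3 (R : realType) (n : nat) : (3 <= n)%N ->
  (~~ odd n -> storability R n = 2) /\
  (odd n -> storability R n = 1 + 1 / cos (pi / n%:R) /\
            2 < 1 + 1 / cos (pi / (n%:R : R))).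
Proof.
move=> n_ge3; have n_gt0 : (0 < n)%N by apply: leq_trans n_ge3.
split => [n_even | n_odd].
  have n_eq : n = (n./2).*2 by rewrite -[LHS]odd_double_half (negbTE n_even).
  have half_gt0 : (0 < n./2)%N by rewrite -double_gt0 -n_eq.
  have half_angle : angle R n n./2 = pi by rewrite {1}n_eq angle_half_even.
  have -> : 2 = 1 + 1 / cos 0 :> R by rewrite cos0 divr1.
  apply: (storability_eq_sec n_ge3 (d := n./2) (d' := n./2)); rewrite ?cos0 ?subr0 ?addr0 //.
  by move=> i j; apply: cos_geN1.
have n_eq : n = (n./2).*2.+1 by rewrite -[LHS]odd_double_half n_odd.
have [d_eq d'_eq] := angle_half_odd R n./2; rewrite -n_eq in d_eq d'_eq.
have ca_gt0 := cos_pi_div_gt0 R n_ge3.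
split; first by apply: storability_eq_sec d_eq d'_eq _ => // i j; apply: cos_angle_sub_odd.
have : 1 < 1 / cos (pi / n%:R : R) by rewrite ltr_pdivlMr // mul1r cos_pi_div_lt1.
lra.
Qed.
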